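(* Let $(A,B)$ be an $n\times n$ definite pencil and let $\epsilon>0$. If $A',B'\in\mathbb{C}^{n\times n}$ satisfy $\|A-A'\|_2,\|B-B'\|_2\le\eta<\frac{\epsilon}{\sqrt2}$ with $A-A'$ and $B-B'$ Hermitian, then $$\Lambda^{\mathrm{sym}}_{\epsilon-\sqrt2\eta}(A',B')\subseteq\Lambda^{\mathrm{sym}}_\epsilon(A,B).$$
   Context: A pencil $(A,B)$ of $n\times n$ complex matrices is definite if $A,B$ are Hermitian and $\gamma(A,B)=\min_{\|x\|_2=1}|x^H(A+iB)x|>0$. For a pencil $(A,B)$ with $A,B$ Hermitian and $\delta>0$, $\Lambda^{\mathrm{sym}}_\delta(A,B)=\{z\in\mathbb{C}:(A+E)u=z(B+F)u$ for some $u\ne0$ and Hermitian $E,F$ with $\sqrt{\|E\|_2^2+\|F\|_2^2}\le\delta\}$. *)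

From HB Require Import structures.
From mathcomp Require Import all_boot all_order all_algebra.
From mathcomp Require Import complex.
From mathcomp Require Import classical_sets reals.
Set Implicit Arguments. Unset Strict Implicit. Unset Printing Implicit Defensive.
Import Order.TTheory GRing.Theory Num.Theory.
Local Open Scope ring_scope.
Local Open Scope classical_set_scope.

Section Pencils.
Variable R : realType.
Local Notation C := R[i].

Definition ctrmx (m n : nat) (M : 'M[C]_(m, n)) : 'M[C]_(n, m) :=
  (map_mx (@conjc R) M)^T.

Definition herm_mx (n : nat) (M : 'M[C]_n) : Prop := ctrmx M = M.

Definition vnorm (n : nat) (x : 'cV[C]_n) : R :=
  Num.sqrt (\sum_(i < n) (ComplexField.Normc.normc (x i 0)) ^+ 2).

Definition norm2 (n : nat) (M : 'M[C]_n) : R :=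
  sup [set vnorm (M *m x) | x in [set x : 'cV[C]_n | vnorm x = 1]].

Definition crawford (n : nat) (A B : 'M[C]_n) : R :=
  inf [set ComplexField.Normc.normc ((ctrmx x *m (A + (Complex 0 1) *: B) *m x) 0 0)
      | x in [set x : 'cV[C]_n | vnorm x = 1]].

Definition definite_pencil (n : nat) (A B : 'M[C]_n) : Prop :=
  herm_mx A /\ herm_mx B /\ 0 < crawford A B.

Definition sym_pseudospec (n : nat) (delta : R) (A B : 'M[C]_n) : set C :=
  [set z | exists (u : 'cV[C]_n) (E F : 'M[C]_n),
      [/\ u != 0, herm_mx E, herm_mx F,
          Num.sqrt (norm2 E ^+ 2 + norm2 F ^+ 2) <= delta &
          (A + E) *m u = z *: ((B + F) *m u)]].

End Pencils.

From HB Require Import structures.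
From mathcomp Require Import all_boot all_order all_algebra.
From mathcomp Require Import complex.
From mathcomp Require Import boolp classical_sets reals.
From mathcomp Require Import ring lra.
Import Order.TTheory GRing.Theory Num.Theory.
Local Open Scope ring_scope.
Local Open Scope classical_set_scope.
Set Implicit Arguments. Unset Strict Implicit.

(* Given (A' + E) u = z (B' + F) u with E, F Hermitian, the Hermitian
   matrices E - (A - A') and F - (B - B') solve the same equation for the
   pencil (A, B).  The triangle inequality for the spectral norm bounds their
   norms by ||E|| + eta and ||F|| + eta, and Minkowski's inequality in the
   plane, applied with the vector (eta, eta) of length sqrt 2 * eta, bounds
   the joint size of the new perturbation by sqrt (||E||^2 + ||F||^2) +
   sqrt 2 * eta <= eps.  The triangle inequality for the spectral norm comes
   in turn from Minkowski's inequality for the Euclidean norm of vectors. *)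

Section FiniteSums.
Variables (R : rcfType) (n : nat).
Implicit Types a b c : 'I_n -> R.

Lemma sum_sqr_ge0 a : 0 <= \sum_i a i ^+ 2.
Proof. by apply: sumr_ge0 => i _; apply: sqr_ge0. Qed.

Lemma cauchy_schwarz_sqr a b :
  (\sum_i a i * b i) ^+ 2 <= (\sum_i a i ^+ 2) * (\sum_i b i ^+ 2).
Proof.
have lagrange : \sum_i \sum_j (a i * b j - a j * b i) ^+ 2 +
    (\sum_i a i * b i) ^+ 2 *+ 2 = (\sum_i a i ^+ 2) * (\sum_i b i ^+ 2) *+ 2.
  rewrite !mulr2n expr2 !big_distrlr [X in _ = _ + X]exchange_big /=.
  rewrite -!big_split /=; apply: eq_bigr => i _.
  rewrite -!big_split /=; apply: eq_bigr => j _; ring.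
have : 0 <= \sum_i \sum_j (a i * b j - a j * b i) ^+ 2.
  by apply: sumr_ge0 => i _; apply: sum_sqr_ge0.
lra.
Qed.

Lemma cauchy_schwarz a b :
  \sum_i a i * b i <= Num.sqrt (\sum_i a i ^+ 2) * Num.sqrt (\sum_i b i ^+ 2).
Proof.
rewrite -sqrtrM ?sum_sqr_ge0 //; apply: le_trans (ler_norm _) _.
by rewrite -sqrtr_sqr ler_wsqrtr // cauchy_schwarz_sqr.
Qed.

Lemma minkowski a b c :
    (forall i, 0 <= a i) -> (forall i, 0 <= b i) -> (forall i, 0 <= c i) ->
    (forall i, c i <= a i + b i) ->
  Num.sqrt (\sum_i c i ^+ 2) <=
    Num.sqrt (\sum_i a i ^+ 2) + Num.sqrt (\sum_i b i ^+ 2).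
Proof.
move=> a_ge0 b_ge0 c_ge0 c_le.
rewrite -(ger0_norm (addr_ge0 (sqrtr_ge0 _) (sqrtr_ge0 _))) -sqrtr_sqr.
rewrite ler_wsqrtr // sqrrD !sqr_sqrtr ?sum_sqr_ge0 //.
apply: le_trans (_ : _ <= \sum_i (a i + b i) ^+ 2) _.
  by apply: ler_sum => i _; rewrite ler_sqr ?nnegrE ?addr_ge0.
under eq_bigr do rewrite sqrrD.
rewrite !big_split /=; have := cauchy_schwarz a b; lra.
Qed.
End FiniteSums.

Lemma sqrt_sqrD_shift (R : rcfType) (x y a b t : R) :
    0 <= x -> 0 <= y -> 0 <= a -> 0 <= b -> 0 <= t ->
    x <= a + t -> y <= b + t ->
  Num.sqrt (x ^+ 2 + y ^+ 2) <= Num.sqrt (a ^+ 2 + b ^+ 2) + Num.sqrt 2 * t.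
Proof.
move=> x0 y0 a0 b0 t0 xle yle.
pose v2 (p q : R) (i : 'I_2) := if i == ord0 then p else q.
have sum_v2 p q : \sum_i v2 p q i ^+ 2 = p ^+ 2 + q ^+ 2.
  by rewrite big_ord_recl big_ord1.
have -> : Num.sqrt 2 * t = Num.sqrt (\sum_i v2 t t i ^+ 2).
  by rewrite sum_v2 -mulr2n -[t ^+ 2 *+ 2]mulr_natl sqrtrM // sqrtr_sqr ger0_norm.
by rewrite -!sum_v2; apply: minkowski => i; rewrite /v2; case: ifP.
Qed.

(* [sup] is [0] on the empty set, whence the sign conditions. *)
Lemma sup_ge0 (R : realType) (A : set R) :
  has_ubound A -> (forall r, A r -> 0 <= r) -> 0 <= sup A.
Proof.
move=> ubA A_ge0; have [[r Ar]|/nonemptyPn ->] := pselect (A !=set0).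
  exact: le_trans (A_ge0 r Ar) (ub_le_sup ubA Ar).
by rewrite sup0.
Qed.

Lemma sup_le_ge0 (R : realType) (A : set R) y :
  0 <= y -> ubound A y -> sup A <= y.
Proof.
move=> y_ge0 ubAy; have [neA|/nonemptyPn ->] := pselect (A !=set0).
  exact: ge_sup.
by rewrite sup0.
Qed.

Section SpectralNorm.
Variable R : realType.
Local Notation C := R[i].
Local Notation normc := (@ComplexField.Normc.normc R).

Lemma normc_ge0 (z : C) : 0 <= normc z.
Proof. by case: z => a b; rewrite /= sqrtr_ge0. Qed.

Lemma normcB_le (u v : C) : normc (u - v) <= normc u + normc v.
Proof. by rewrite -(normcN v); apply: le_normcD. Qed.

Lemma normc_sum_le n (F : 'I_n -> C) : normc (\sum_i F i) <= \sum_i normc (F i).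
Proof.
elim/big_rec2: _ => [|i s r _ le_sr]; first by rewrite ComplexField.Normc.normc0.
exact: le_trans (le_normcD _ _) (lerD (lexx _) le_sr).
Qed.

Lemma vnormB_le n (u v : 'cV[C]_n) : vnorm (u - v) <= vnorm u + vnorm v.
Proof.
rewrite /vnorm; under eq_bigr do rewrite !mxE.
by apply: minkowski => i; rewrite ?normc_ge0 ?normcB_le.
Qed.

Lemma vnorm_mulmx_le n (M : 'M[C]_n) (x : 'cV[C]_n) :
  vnorm (M *m x) <= Num.sqrt (\sum_i \sum_j normc (M i j) ^+ 2) * vnorm x.
Proof.
rewrite /vnorm -sqrtrM; last by apply: sumr_ge0 => i _; apply: sum_sqr_ge0.
rewrite ler_wsqrtr // big_distrl ler_sum // => i _ /=; rewrite mxE.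
apply: le_trans (cauchy_schwarz_sqr (fun j => normc (M i j)) (fun j => normc (x j 0))).
have sum_ge0 : 0 <= \sum_j normc (M i j) * normc (x j 0).
  by apply: sumr_ge0 => j _; rewrite mulr_ge0 ?normc_ge0.
rewrite ler_sqr ?nnegrE ?normc_ge0 //.
apply: le_trans (normc_sum_le _) _.
by apply: ler_sum => j _; rewrite ComplexField.Normc.normcM.
Qed.

Definition unit_gains n (M : 'M[C]_n) : set R :=
  [set vnorm (M *m x) | x in [set x : 'cV[C]_n | vnorm x = 1]].

Lemma unit_gains_ubound n (M : 'M[C]_n) : has_ubound (unit_gains M).
Proof.
exists (Num.sqrt (\sum_i \sum_j normc (M i j) ^+ 2)) => _ [x x1 <-].
by rewrite -[leRHS]mulr1 -x1 vnorm_mulmx_le.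
Qed.

Lemma vnorm_mulmx_le_norm2 n (M : 'M[C]_n) (x : 'cV[C]_n) :
  vnorm x = 1 -> vnorm (M *m x) <= norm2 M.
Proof. by move=> x1; apply: (ub_le_sup (unit_gains_ubound M)); exists x. Qed.

Lemma norm2_ge0 n (M : 'M[C]_n) : 0 <= norm2 M.
Proof. by apply: sup_ge0 (unit_gains_ubound M) _ => _ [x _ <-]; apply: sqrtr_ge0. Qed.

Lemma norm2B_le n (X Y : 'M[C]_n) : norm2 (X - Y) <= norm2 X + norm2 Y.
Proof.
apply: sup_le_ge0; first by rewrite addr_ge0 ?norm2_ge0.
move=> _ [x x1 <-]; rewrite mulmxBl; apply: le_trans (vnormB_le _ _) _.
by apply: lerD; apply: vnorm_mulmx_le_norm2.
Qed.

Lemma herm_mxB n (X Y : 'M[C]_n) : herm_mx X -> herm_mx Y -> herm_mx (X - Y).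
Proof. by rewrite /herm_mx /ctrmx map_mxB => hX hY; rewrite linearB /= hX hY. Qed.

End SpectralNorm.

Theorem lemma3p10 (R : realType) (n : nat) (A B A' B' : 'M[R[i]]_n)
    (eps eta : R) :
  definite_pencil A B -> 0 < eps ->
  herm_mx (A - A') -> herm_mx (B - B') ->
  norm2 (A - A') <= eta -> norm2 (B - B') <= eta ->
  eta < eps / Num.sqrt 2 ->
  sym_pseudospec (eps - Num.sqrt 2 * eta) A' B' `<=` sym_pseudospec eps A B.
Proof.
move=> _ _ hermA hermB normA normB _ z [u [E [F [u0 hermE hermF normEF eqEF]]]].
have eta_ge0 : 0 <= eta := le_trans (norm2_ge0 _) normA.
exists u, (E - (A - A')), (F - (B - B')); split => //.
- exact: herm_mxB.
- exact: herm_mxB.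
- rewrite lerBrDr in normEF; apply: le_trans normEF.
  have le_normE := le_trans (norm2B_le E (A - A')) (lerD (lexx _) normA).
  have le_normF := le_trans (norm2B_le F (B - B')) (lerD (lexx _) normB).
  by apply: sqrt_sqrD_shift le_normE le_normF; rewrite ?norm2_ge0.
- by rewrite !opprB (addrCA A) (addrCA B) !subrKC (addrC E) (addrC F).
Qed.
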